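(* Let $\Sigma$ be an alphabet with at least two letters, $k\ge1$, and $f\colon(\Sigma^* )^k\to\Sigma^*$ RCP. Then there exist $p_{f,1},\ldots,p_{f,k},e_f\in\mathbb{N}$ such that for all $x_1,\ldots,x_k\in\Sigma^*$ and all $a\in\Sigma$, $$|f(x_1,\ldots,x_k)|=p_{f,1}|x_1|+\cdots+p_{f,k}|x_k|+e_f,$$ $$|f(x_1,\ldots,x_k)|_a=p_{f,1}|x_1|_a+\cdots+p_{f,k}|x_k|_a+|f(\varepsilon,\ldots,\varepsilon)|_a,$$ where $e_f=|f(\varepsilon,\ldots,\varepsilon)|$ and $p_{f,i}=|f(\varepsilon,\ldots,\varepsilon,c,\varepsilon,\ldots,\varepsilon)|-|f(\varepsilon,\ldots,\varepsilon)|$ with the letter $c\in\Sigma$ in the $i$-th position (this value being independent of the choice of $c$).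
   Context: $\Sigma^*$ is the free monoid over $\Sigma$ (finite words, concatenation, empty word $\varepsilon$); $|u|$ is the length of $u$ and $|u|_a$ the number of occurrences of the letter $a$ in $u$. A function $f\colon(\Sigma^* )^k\to\Sigma^*$ is RCP if for every monoid morphism $\varphi\colon\Sigma^*\to\Sigma^*$ and all $u_1,\ldots,u_k,v_1,\ldots,v_k$ with $\varphi(u_i)=\varphi(v_i)$ for all $i$, we have $\varphi(f(u_1,\ldots,u_k))=\varphi(f(v_1,\ldots,v_k))$. *)

From mathcomp Require Import all_boot.
Set Implicit Arguments. Unset Strict Implicit. Unset Printing Implicit Defensive.

Definition monoid_morph (S : finType) (phi : seq S -> seq S) : Prop :=
  phi [::] = [::] /\ forall u v : seq S, phi (u ++ v) = phi u ++ phi v.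

Definition RCP (S : finType) (k : nat) (f : k.-tuple (seq S) -> seq S) : Prop :=
  forall phi : seq S -> seq S, monoid_morph phi ->
  forall u v : k.-tuple (seq S),
    (forall i : 'I_k, phi (tnth u i) = phi (tnth v i)) ->
    phi (f u) = phi (f v).

Definition eps_tuple (S : finType) (k : nat) : k.-tuple (seq S) :=
  [tuple [::] | j < k].

Definition unit_tuple (S : finType) (k : nat) (i : 'I_k) (c : S) : k.-tuple (seq S) :=
  [tuple (if j == i then [:: c] else [::]) | j < k].

From mathcomp Require Import all_boot zify.
Set Implicit Arguments. Unset Strict Implicit. Unset Printing Implicit Defensive.

(* For a letter a and n in N^k let g_a(n) be the number of a's in f(a^n_1, ..., a^n_k).
   RCP applied to the morphisms w |-> c^(|w|_P) shows that |f(x)|_P only depends on the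
   P-counts of the x_i; in particular |f(x)|_a = g_a(|x_1|_a, ..., |x_k|_a).  For b <> a,
   evaluating f on (a^n_i b^m_i)_i and on (a^(n_i+m_i))_i and counting a's, b's and
   occurrences of {a, b} gives g_a(n) + g_b(m) = g_a(n + m) + g_b(0).  So every g_a is
   affine on N^k, with the same slopes for all letters; these slopes are nonnegative
   because g_a takes values in N, and summing the count formula over all letters gives
   the length formula. *)

Section AffineMaps.

Variable k : nat.
Implicit Types (n m : {ffun 'I_k -> nat}) (i j : 'I_k).

Definition delta i : {ffun 'I_k -> nat} := [ffun j => nat_of_bool (j == i)].

Lemma sum_mul_delta i (c : 'I_k -> nat) : \sum_j c j * delta i j = c i.
Proof.
rewrite (bigD1 i) //= ffunE eqxx muln1 big1 ?addn0 // => j /negPf ji.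
by rewrite ffunE ji muln0.
Qed.

Lemma sum_delta i : \sum_j delta i j = 1.
Proof. by have := sum_mul_delta i (fun=> 1); under eq_bigr do rewrite mul1n. Qed.

Definition affine (g : {ffun 'I_k -> nat} -> nat) :=
  forall n m, g [ffun j => n j + m j] + g [ffun=> 0] = g n + g m.

Variable g : {ffun 'I_k -> nat} -> nat.
Hypothesis g_affine : affine g.
Let g0 := g [ffun=> 0].

Lemma affine_sum n : g n + (\sum_i n i) * g0 = \sum_i g (delta i) * n i + g0.
Proof.
move Nn: (\sum_i n i) => N; elim: N n Nn => [|N IH] n Nn.
  have n0 i : n i = 0 by apply/eqP; rewrite -leqn0 -Nn (bigD1 i) //= leq_addr.
  have -> : n = [ffun=> 0] by apply/ffunP => j; rewrite ffunE n0.
  by rewrite big1 ?mul0n ?addn0 // => i _; rewrite ffunE muln0.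
have [i ni] : exists i, 0 < n i.
  apply/existsP; apply: contraT; rewrite negb_exists => /forallP n0.
  by move: Nn; rewrite big1 // => i _; apply/eqP; rewrite -leqn0 leqNgt n0.
pose n' := [ffun j => n j - delta i j].
have nE : n = [ffun j => delta i j + n' j].
  by apply/ffunP => j; rewrite !ffunE; case: eqVneq => [->|] /=; lia.
have sum_nE : \sum_j n j = (\sum_j n' j).+1.
  by rewrite nE; under eq_bigr do rewrite ffunE; rewrite big_split sum_delta.
have wsum_nE : \sum_j g (delta j) * n j = g (delta i) + \sum_j g (delta j) * n' j.
  by rewrite nE; under eq_bigr do rewrite ffunE mulnDr; rewrite big_split sum_mul_delta.
have := g_affine (delta i) n'; rewrite -nE -/g0.
move: Nn; rewrite sum_nE => -[/IH IHn'] gn.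
rewrite wsum_nE -addnA -IHn'; lia.
Qed.

Lemma affine_delta_ge i : g0 <= g (delta i).
Proof.
(* A slope below 0 would make g (M * delta i) negative for M = g0 + 1. *)
pose M := g0.+1; pose n := [ffun j => M * delta i j].
have := affine_sum n.
have sum_n (c : 'I_k -> nat) : \sum_j c j * n j = c i * M.
  rewrite -(sum_mul_delta i c) big_distrl; apply: eq_bigr => j _.
  by rewrite ffunE mulnCA mulnC.
have := sum_n (fun=> 1); under eq_bigr do rewrite mul1n; move=> ->.
rewrite sum_n; nia.
Qed.

Lemma affine_linear n : g n = \sum_i (g (delta i) - g0) * n i + g0.
Proof.
have := affine_sum n; rewrite big_distrl /=.
have : \sum_i (g (delta i) - g0) * n i + \sum_i n i * g0 = \sum_i g (delta i) * n i.
  rewrite -big_split; apply: eq_bigr => i _ /=.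
  by rewrite [n i * _]mulnC -mulnDl subnK ?affine_delta_ge.
by move=> <-; rewrite addnAC => /addIn.
Qed.

End AffineMaps.

Lemma count_pred1U (T : eqType) (a b : T) (s : seq T) : a != b ->
  count [predU pred1 a & pred1 b] s = count_mem a s + count_mem b s.
Proof.
move=> ab; rewrite -count_predUI [count (predI _ _) _](@eq_count _ _ pred0) ?count_pred0 ?addn0 //.
move=> c /=.
by case: eqP => // ->; rewrite (negPf ab).
Qed.

Section RCPCounts.

Variables (S : finType) (k : nat) (f : k.-tuple (seq S) -> seq S).
Hypothesis f_RCP : RCP f.
Implicit Types (a b : S) (n m : {ffun 'I_k -> nat}) (x y : k.-tuple (seq S)).

Definition counts (P : pred S) x : {ffun 'I_k -> nat} := [ffun j => count P (tnth x j)].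

Definition powers a n : k.-tuple (seq S) := [tuple nseq (n j) a | j < k].

Lemma count_RCP (P : pred S) x y : counts P x = counts P y -> count P (f x) = count P (f y).
Proof.
move=> eq_xy; have [c _|noS] := pickP (@predT S); last first.
  have nil (s : seq S) : s = [::] by case: s => // c; have := noS c.
  by rewrite (nil (f x)) (nil (f y)).
pose phi s := nseq (count P s) c.
have phi_morph : monoid_morph phi by split=> // u v; rewrite /phi count_cat nseqD.
have eq_phi i : phi (tnth x i) = phi (tnth y i).
  by move/ffunP/(_ i): eq_xy; rewrite !ffunE /phi => ->.
by have /(congr1 size) := f_RCP phi_morph eq_phi; rewrite !size_nseq.
Qed.

Lemma counts_powers (P : pred S) a n : counts P (powers a n) = [ffun j => P a * n j].
Proof. by apply/ffunP => j; rewrite !ffunE tnth_mktuple count_nseq. Qed.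

Lemma count_powers_counts a x :
  count_mem a (f x) = count_mem a (f (powers a (counts (pred1 a) x))).
Proof.
by apply: count_RCP; rewrite counts_powers; apply/ffunP => j; rewrite !ffunE /= eqxx mul1n.
Qed.

Definition fcount a n := count_mem a (f (powers a n)).

Lemma fcount_exchange a b n m : a != b ->
  fcount a n + fcount b m = fcount a [ffun j => n j + m j] + fcount b [ffun=> 0].
Proof.
move=> ab; have ba : (b == a) = false by rewrite eq_sym (negPf ab).
pose z := [tuple nseq (n j) a ++ nseq (m j) b | j < k].
have counts_z P : counts P z = [ffun j => P a * n j + P b * m j].
  by apply/ffunP => j; rewrite !ffunE tnth_mktuple count_cat !count_nseq.
have za : count_mem a (f z) = fcount a n.
  apply: count_RCP; rewrite counts_z counts_powers; apply/ffunP => j.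
  by rewrite !ffunE /= eqxx ba mul1n mul0n addn0.
have zb : count_mem b (f z) = fcount b m.
  apply: count_RCP; rewrite counts_z counts_powers; apply/ffunP => j.
  by rewrite !ffunE /= eqxx (negPf ab) mul1n mul0n.
have zab : count [predU pred1 a & pred1 b] (f z) =
           count [predU pred1 a & pred1 b] (f (powers a [ffun j => n j + m j])).
  apply: count_RCP; rewrite counts_z counts_powers; apply/ffunP => j.
  by rewrite !ffunE !inE !eqxx orbT !mul1n.
have ab_b : count_mem b (f (powers a [ffun j => n j + m j])) = fcount b [ffun=> 0].
  apply: count_RCP; rewrite !counts_powers; apply/ffunP => j.
  by rewrite !ffunE /= (negPf ab) muln0.
by rewrite -za -zb -count_pred1U // zab count_pred1U // ab_b.
Qed.

Lemma fcount_affine a b : a != b -> affine (fcount a).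
Proof.
move=> ab n m; have := fcount_exchange n m ab; have := fcount_exchange [ffun=> 0] m ab.
by rewrite (_ : [ffun j => _ + m j] = m) //; [lia | apply/ffunP => j; rewrite !ffunE].
Qed.

Lemma fcount_slope a b i : a != b ->
  fcount a (delta i) - fcount a [ffun=> 0] = fcount b (delta i) - fcount b [ffun=> 0].
Proof.
move=> ab; have := fcount_exchange [ffun=> 0] (delta i) ab.
by rewrite (_ : [ffun j => _ + delta i j] = delta i) //; [lia | apply/ffunP => j; rewrite !ffunE].
Qed.

Lemma count_linear a b x : a != b ->
  count_mem a (f x) =
  \sum_i (fcount a (delta i) - fcount a [ffun=> 0]) * count_mem a (tnth x i) + fcount a [ffun=> 0].
Proof.
move=> ab; rewrite count_powers_counts -/(fcount a _) (affine_linear (fcount_affine ab)).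
by under eq_bigr do rewrite ffunE.
Qed.

End RCPCounts.

Lemma eps_tuple_powers (S : finType) (k : nat) (a : S) : eps_tuple S k = powers a [ffun=> 0].
Proof. by apply: eq_mktuple => j; rewrite ffunE. Qed.

Lemma unit_tuple_powers (S : finType) (k : nat) (i : 'I_k) (c : S) :
  unit_tuple i c = powers c (delta i).
Proof. by apply: eq_mktuple => j; rewrite ffunE; case: (j == i). Qed.

Lemma sum_count_mem (T : finType) (s : seq T) : \sum_(a : T) count_mem a s = size s.
Proof.
elim: s => [|x s IH] /=; first by rewrite big1.
by rewrite big_split /= IH (bigD1 x) //= eqxx big1 // => a /negPf; rewrite eq_sym => ->.
Qed.

Theorem mainTheorem13 (S : finType) (k : nat) (f : k.-tuple (seq S) -> seq S) :
  1 < #|S| -> 0 < k -> RCP f ->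
  exists (p : 'I_k -> nat) (e : nat),
    e = size (f (eps_tuple S k)) /\
    (forall (i : 'I_k) (c : S), size (f (unit_tuple i c)) = p i + e) /\
    (forall x : k.-tuple (seq S),
       size (f x) = \sum_(i < k) p i * size (tnth x i) + e /\
       forall a : S,
         count_mem a (f x) =
         \sum_(i < k) p i * count_mem a (tnth x i) + count_mem a (f (eps_tuple S k))).
Proof.
move=> /card_gt1P [a0 [b0 [_ _ ab0]]] _ f_RCP.
pose p i := fcount f a0 (delta i) - fcount f a0 [ffun=> 0].
have other (a : S) : exists b, a != b.
  by case: (eqVneq a a0) => [->|]; [exists b0 | exists a0].
have slope (a : S) i : fcount f a (delta i) - fcount f a [ffun=> 0] = p i.
  by case: (eqVneq a a0) => [->//|aa0]; exact: fcount_slope.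
have count_f x a : count_mem a (f x) =
    \sum_i p i * count_mem a (tnth x i) + count_mem a (f (eps_tuple S k)).
  have [b ab] := other a; rewrite (count_linear f_RCP x ab) (eps_tuple_powers _ a).
  by under eq_bigr do rewrite slope.
have size_f x : size (f x) = \sum_i p i * size (tnth x i) + size (f (eps_tuple S k)).
  rewrite -!sum_count_mem; under eq_bigr do rewrite count_f.
  rewrite big_split /= exchange_big; congr (_ + _); apply: eq_bigr => i _.
  by rewrite -big_distrr sum_count_mem.
exists p, (size (f (eps_tuple S k))); split=> //; split=> [i c|x]; last first.
  by split=> // a; exact: count_f.
rewrite size_f unit_tuple_powers -[p i](sum_mul_delta i p); congr (_ + _).
by apply: eq_bigr => j _; rewrite tnth_mktuple size_nseq.
Qed.
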